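(* Let $T\in\mathbb{C}^{l\times l}$ and let $\lambda_1,\dots,\lambda_k$ be $k$ distinct eigenvalues of $T$. Then for every $\gamma=(\gamma_{ij})_{1\le i<j\le k}$ with $\gamma_{ij}\in\mathbb{C}$, one has $\operatorname{rank}(Q_T(\gamma))\le kl-k$, equivalently $s_{kl-(k-1)}(Q_T(\gamma))=0$.
   Context: For $T\in\mathbb{C}^{l\times l}$, scalars $\lambda_1,\dots,\lambda_k\in\mathbb{C}$ and $\gamma=(\gamma_{ij})_{1\le i<j\le k}\in\mathbb{C}^{k(k-1)/2}$, $Q_T(\gamma)\in\mathbb{C}^{kl\times kl}$ is the $k\times k$ block upper triangular matrix whose $(i,i)$ block is $T-\lambda_i I_l$, whose $(i,j)$ block for $i<j$ is $\gamma_{ij}I_l$, and whose blocks below the diagonal are zero. $s_j(\cdot)$ denotes the $j$-th largest singular value. *)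

From HB Require Import structures.
From mathcomp Require Import all_boot all_order all_algebra.
From mathcomp Require Import reals.
From mathcomp Require Import complex.
Set Implicit Arguments. Unset Strict Implicit. Unset Printing Implicit Defensive.
Import Order.TTheory GRing.Theory Num.Theory.
Local Open Scope ring_scope.
Local Open Scope complex_scope.

(* Entries of gam with i >= j are unused. *)
Definition QT (R : realType) (l k : nat) (T : 'M[R[i]]_l)
    (lam : 'I_k -> R[i]) (gam : 'I_k -> 'I_k -> R[i])
    : 'M[R[i]]_(\sum_(i < k) l) :=
  \mxblock_(i < k, j < k)
     (if i == j then T - (lam i)%:M
      else if (i < j)%N then (gam i j)%:M else (0 : 'M[R[i]]_l)).

From HB Require Import structures.
From mathcomp Require Import all_boot all_order all_algebra.
From mathcomp Require Import reals.
From mathcomp Require Import complex.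
From mathcomp Require Import zify.
Set Implicit Arguments. Unset Strict Implicit. Unset Printing Implicit Defensive.
Import Order.TTheory GRing.Theory Num.Theory.
Local Open Scope ring_scope.

(* [QT T lam gam] is [1 (x) T - N (x) 1], where [N] is the upper-triangular
   k x k matrix with diagonal [lam] and entries [- gam i j] above it.  As the
   [lam p] are distinct, [N] has for every [p] a left eigenvector [w_p] for
   [lam p] that vanishes before position [p] and equals 1 at [p].  If [u_p] is
   a left eigenvector of [T] for [lam p], then [w_p (x) u_p] is a left null
   vector of [QT T lam gam]; these [k] vectors are in block echelon form, hence
   independent, so the corank of [QT T lam gam] is at least [k]. *)

(* The equation says that [w] is a left eigenvector, for the eigenvalue [d p],
   of the upper-triangular matrix with diagonal [d] and entries [- g i j] above it. *)
Lemma triangular_left_eigenvector (F : fieldType) k (d : 'I_k -> F)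
    (g : 'I_k -> 'I_k -> F) : injective d -> forall p : 'I_k,
  exists2 w : 'I_k -> F, w p = 1 /\ (forall j : 'I_k, (j < p)%N -> w j = 0) &
    forall j, w j * (d p - d j) + \sum_(i < k | (i < j)%N) w i * g i j = 0.
Proof.
move=> d_inj p.
suff /(_ k (leqnn k)) [w w_supp w_eqn] : forall n, (n <= k)%N -> exists2 w : 'I_k -> F,
    w p = 1 /\ (forall j : 'I_k, (j < p)%N -> w j = 0) & forall j : 'I_k, (j < n)%N ->
      w j * (d p - d j) + \sum_(i < k | (i < j)%N) w i * g i j = 0.
  by exists w => // j; apply: w_eqn.
elim=> [_|n IHn n_lt].
  exists (fun j => (j == p)%:R) => //; split=> [|j j_lt]; first by rewrite eqxx.
  by rewrite -val_eqE /= ltn_eqF.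
have [w [w_p w_lt] w_eqn] := IHn (ltnW n_lt).
pose j0 := Ordinal n_lt.
have [p_lt|n_le] := ltnP p n; last first.
  exists w => // j; rewrite ltnS leq_eqVlt => /orP[/eqP j_n|]; last exact: w_eqn.
  (* for [j <= p] every term vanishes: [w] is zero before [p] and [d p - d p = 0] *)
  rewrite big1 ?addr0 => [|i i_lt]; last by rewrite w_lt ?mul0r // (leq_trans i_lt) // j_n.
  have [j_lt|j_ge] := ltnP j p; first by rewrite w_lt ?mul0r.
  have -> : j = p by apply/val_inj/eqP; rewrite eqn_leq j_ge andbT /= j_n.
  by rewrite subrr mulr0.
have d_neq : d p - d j0 != 0.
  by rewrite subr_eq0; apply: contraTneq p_lt => /d_inj ->; rewrite ltnn.
pose c := - (\sum_(i < k | (i < n)%N) w i * g i j0) / (d p - d j0).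
pose w' (j : 'I_k) := if j == j0 then c else w j.
have w'_j0 : w' j0 = c by rewrite /w' eqxx.
have w'_lt (j : 'I_k) : (j < n)%N -> w' j = w j by move=> j_lt; rewrite /w' ifN // neq_ltn j_lt.
exists w'.
  split=> [|j j_lt]; first by rewrite w'_lt.
  by rewrite w'_lt ?w_lt // (ltn_trans j_lt).
move=> j; rewrite ltnS leq_eqVlt => /orP[/eqP j_n|j_lt].
  have -> : j = j0 by apply/val_inj.
  rewrite w'_j0 /c divfK //.
  rewrite [X in _ + X](eq_bigr (fun i => w i * g i j0)) ?addNr // => i i_lt.
  by rewrite w'_lt.
under eq_bigr => i i_lt do rewrite w'_lt ?(ltn_trans i_lt) //.
by rewrite w'_lt // w_eqn.
Qed.

Lemma row_free_mxrow_echelon (F : fieldType) k (n_ : 'I_k -> nat)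
    (K : 'M[F]_(k, \sum_j n_ j)) :
  (forall p j : 'I_k, (j < p)%N -> row p (submxrow K j) = 0) ->
  (forall p, row p (submxrow K p) != 0) -> row_free K.
Proof.
move=> K_echelon K_pivot; rewrite -kermx_eq0 -submx0.
apply/rV_subP => a /sub_kermxP aK; rewrite submx0.
have a_blockE j : \sum_q a 0 q *: row q (submxrow K j) = 0.
  by rewrite -mulmx_sum_row mul_submxrow aK submxrow0.
suff a0 n (p : 'I_k) : (p < n)%N -> a 0 p = 0.
  by apply/eqP/rowP => p; rewrite mxE (a0 k).
elim: n p => [//|n IHn] p; rewrite ltnS leq_eqVlt => /orP[/eqP p_n|]; last exact: IHn.
have := a_blockE p; rewrite (bigD1 p) //= big1 ?addr0 => [|q q_neq].
  by move/eqP; rewrite scaler_eq0 (negbTE (K_pivot p)) orbF => /eqP.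
have [q_lt|p_lt] := ltnP q p; first by rewrite IHn ?scale0r // -p_n.
by rewrite K_echelon ?scaler0 // ltn_neqAle p_lt andbT eq_sym val_eqE.
Qed.

Definition Qmx (F : fieldType) l k (T : 'M[F]_l) (lam : 'I_k -> F)
    (gam : 'I_k -> 'I_k -> F) : 'M[F]_(\sum_(i < k) l) :=
  \mxblock_(i < k, j < k)
     (if i == j then T - (lam i)%:M
      else if (i < j)%N then (gam i j)%:M else (0 : 'M[F]_l)).

Lemma Qmx_left_null (F : fieldType) l k (T : 'M[F]_l) (lam : 'I_k -> F)
    (gam : 'I_k -> 'I_k -> F) (p : 'I_k) (u : 'rV_l) (w : 'I_k -> F) :
    u *m T = lam p *: u ->
    (forall j, w j * (lam p - lam j) + \sum_(i < k | (i < j)%N) w i * gam i j = 0) ->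
  \mxrow_j (w j *: u) *m Qmx T lam gam = 0.
Proof.
move=> uT w_eqn; rewrite mul_mxrow_mxblock; apply/mxrowP => j.
rewrite mxrowK submxrow0 -[RHS](scale0r u) -(w_eqn j) scalerDl scaler_suml.
rewrite (bigD1 j) //= eqxx mulmxBr -scalemxAl uT mul_mx_scalar !scalerA -scalerBl.
congr (_ + _); first by rewrite mulrBr ![w j * _]mulrC.
rewrite (bigID (fun i : 'I_k => (i < j)%N) (fun i => i != j)) /= [X in _ + X]big1 ?addr0 => [|i].
  apply: eq_big => [i|i /andP[i_neq ->]].
    by apply: andb_idl => i_lt; rewrite -val_eqE ltn_eqF.
  by rewrite (negbTE i_neq) mul_mx_scalar scalerA mulrC.
by rewrite andbC => /andP[/negbTE -> /negbTE ->]; rewrite mulmx0.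
Qed.

Lemma mxrank_le_row_free_annihilator (F : fieldType) m n (K : 'M[F]_(m, n))
    (A : 'M_n) :
  row_free K -> K *m A = 0 -> (\rank A <= n - m)%N.
Proof.
move=> /eqnP rankK /sub_kermxP/mxrankS; rewrite rankK mxrank_ker.
by have := rank_leq_row A; lia.
Qed.

Lemma Qmx_rank (F : fieldType) l k (T : 'M[F]_l) (lam : 'I_k -> F)
    (lam_inj : injective lam) (lam_eig : forall i, eigenvalue T (lam i))
    (gam : 'I_k -> 'I_k -> F) :
  (\rank (Qmx T lam gam) <= k * l - k)%N.
Proof.
have /fin_all_exists2[u uT u_neq0] :
    forall p, exists2 u : 'rV_l, u *m T = lam p *: u & u != 0.
  by move=> p; apply/eigenvalueP.
have /fin_all_exists2[w w_supp w_eqn] := triangular_left_eigenvector gam lam_inj.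
pose K := \mxrow_j \matrix_(p < k) (w p j *: u p).
have K_free : row_free K.
  apply: row_free_mxrow_echelon => [p j j_lt|p]; rewrite mxrowK rowK.
    by rewrite (proj2 (w_supp p)) ?scale0r.
  by rewrite (proj1 (w_supp p)) scale1r.
have KQ : K *m Qmx T lam gam = 0.
  apply/row_matrixP => p; rewrite row_mul row0 row_mxrow.
  under eq_mxrow do rewrite rowK.
  exact: Qmx_left_null.
suff <- : (\sum_(i < k) l = k * l)%N by exact: mxrank_le_row_free_annihilator K_free KQ.
by rewrite sum_nat_const card_ord.
Qed.

Local Open Scope complex_scope.

Theorem mainTheorem2 (R : realType) (l k : nat) (T : 'M[R[i]]_l)
    (lam : 'I_k -> R[i]) (lam_inj : injective lam)
    (lam_eig : forall i : 'I_k, eigenvalue T (lam i))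
    (gam : 'I_k -> 'I_k -> R[i]) :
  (\rank (QT T lam gam) <= k * l - k)%N.
Proof. exact: Qmx_rank. Qed.
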